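(* For every pair of binary hypothesis classes $S,B\subseteq\{-1,1,*\}^X$ and every $n\in\mathbb{Z}_{>0}$, let $m:=\mathsf{Ldim}(S,B)$ and $\varepsilon^*:=\inf\{\varepsilon\ge0:\mathsf{CompOL}_n(S,B,\varepsilon)\ne\emptyset\}$. Then \[ \min\left\{\frac12,\frac m{2n}\right\}\le\varepsilon^*\le O\!\left(\sqrt{\frac mn\log\frac{2m+n}m}\right). \]
   Context: An online learner $L$ processes a sequence $(x_1,y_1),\dots,(x_n,y_n)\in X\times\{-1,1\}$: for each $i$, given $(x_1,y_1),\dots,(x_{i-1},y_{i-1})$ and $x_i$, it outputs a (possibly random) prediction $\hat y_i\in\{-1,1\}$. Define $\mathsf{mistake}(L;(x_i,y_i)_{i=1}^n)=\frac1n\sum_i\Pr[\hat y_i\ne y_i]$ and, for $h:X\to\{-1,1,*\}$, $\mathsf{mistake}(h;(x_i,y_i)_{i=1}^n)=\frac1n\sum_i\mathbf{1}(h(x_i)\ne y_i)$. $\mathsf{CompOL}_n(S,B,\varepsilon)$ is the set of online learners $L$ such that for every $s\in S$ and every sequence with $y_i=s(x_i)$ for all $i$, $\mathsf{mistake}(L;\cdot)\le\inf_{b\in B}\mathsf{mistake}(b;\cdot)+\varepsilon$. A family $(x_\zeta)_{\zeta\in\bigcup_{i=0}^{m-1}\{-1,1\}^i}$ of points of $X$ (a complete binary tree of depth $m$) is shattered by $H$ if for every $\xi=(\xi_1,\dots,\xi_m)\in\{-1,1\}^m$ there is $h\in H$ with $h(x_{\xi_{<i}})=\xi_i$ for all $i=1,\dots,m$,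 where $\xi_{<i}$ is the length-$(i-1)$ prefix. The mutual Littlestone dimension $\mathsf{Ldim}(S,B)$ is the sup of $m\ge0$ such that some such family is shattered by both $S$ and $B$. The case $m=0$ in the upper bound is read with the convention that the bound is $0$. $\log$ base 2. *)

From HB Require Import structures.
From mathcomp Require Import all_boot all_order all_algebra.
From mathcomp Require Import all_classical all_reals all_analysis.
From mathcomp Require Import Rstruct Rstruct_topology.
Set Implicit Arguments. Unset Strict Implicit. Unset Printing Implicit Defensive.
Import Order.TTheory GRing.Theory Num.Theory.
Local Open Scope classical_set_scope.
Local Open Scope ring_scope.

(* Labels: [true] = +1, [false] = -1.  Partial hypotheses X -> {-1,1,*}:
   [Some b] is the label b, [None] is *. *)
Definition hyp (X : Type) := X -> option bool.

(* An online learner: given the history (x_1,y_1),...,(x_{i-1},y_{i-1}) and x_i,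
   it returns Pr[\hat y_i = +1]. *)
Definition learner (X : Type) := seq (X * bool) -> X -> Rdefinitions.R.

Definition is_learner (X : Type) (L : learner X) : Prop :=
  forall hist x, 0 <= L hist x <= 1.

Definition err (p : Rdefinitions.R) (y : bool) : Rdefinitions.R :=
  if y then 1 - p else p.

Fixpoint cumloss (X : Type) (L : learner X) (hist s : seq (X * bool))
  : Rdefinitions.R :=
  match s with
  | [::] => 0
  | (x, y) :: s' => err (L hist x) y + cumloss L (rcons hist (x, y)) s'
  end.

Definition mistakeL (X : Type) (L : learner X) (s : seq (X * bool))
  : Rdefinitions.R :=
  cumloss L [::] s / (size s)%:R.

Definition mistakeH (X : Type) (h : hyp X) (s : seq (X * bool))
  : Rdefinitions.R :=
  (\sum_(p <- s) (if h p.1 == Some p.2 then 0 else 1)) / (size s)%:R.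

Definition CompOL (X : Type) (n : nat) (S B : set (hyp X)) (eps : Rdefinitions.R)
  (L : learner X) : Prop :=
  is_learner L /\
  forall (s : hyp X) (sq : seq (X * bool)),
    S s -> size sq = n -> List.Forall (fun p => s p.1 = Some p.2) sq ->
    ((mistakeL L sq)%:E <=
       ereal_inf [set (mistakeH b sq)%:E | b in B] + eps%:E)%E.

(* complete binary tree of depth m: points x_zeta, zeta in U_{i<m} {-1,1}^i *)
Definition tree (X : Type) (m : nat) := forall i : 'I_m, i.-tuple bool -> X.

Definition prefix (m : nat) (xi : m.-tuple bool) (i : 'I_m) : i.-tuple bool :=
  [tuple tnth xi (widen_ord (ltnW (ltn_ord i)) j) | j < i].

Definition shattered (X : Type) (m : nat) (H : set (hyp X)) (t : tree X m) : Prop :=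
  forall xi : m.-tuple bool, exists2 h, H h &
    forall i : 'I_m, h (t i (prefix xi i)) = Some (tnth xi i).

(* mutual Littlestone dimension, as an extended real (sup of empty set = -oo,
   +oo if unbounded) *)
Definition Ldim (X : Type) (S B : set (hyp X)) : \bar Rdefinitions.R :=
  ereal_sup [set ((m%:R : Rdefinitions.R)%:E) | m in
              [set m : nat | exists t : tree X m, shattered S t /\ shattered B t]].

Definition epsstar (X : Type) (n : nat) (S B : set (hyp X)) : Rdefinitions.R :=
  inf [set eps : Rdefinitions.R | 0 <= eps /\ exists L, CompOL n S B eps L].

Definition log2 (x : Rdefinitions.R) : Rdefinitions.R := ln x / ln 2.

(* Lower bound: along a tree of depth m shattered by both S and B, an adversary
   labels each point against the learner's more likely prediction.  Some s in S
   and b in B realise the resulting branch, so b makes no mistake while the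
   learner errs with probability at least 1/2 in each of the first min(n, m)
   rounds.

   Upper bound: run the Standard Optimal Algorithm (SOA) on the version pair
   (S, B), ranked by the depth of its deepest mutually shattered tree, which is
   at most m.  Against any b in B, contradicting the SOA exactly in the rounds
   where it errs and b does not keeps s and b in the version pair and lowers its
   rank, so there are at most m such rounds, and the resulting expert errs only
   where b does.  Hedge over all flip patterns, with the product prior
   flipping each round with probability m / (n + m), then loses at most
   O(sqrt (n m log ((n + m) / m))) more than every such expert; when m = 0 the
   SOA itself is already competitive. *)

From Pilot Require Import Defs.
From HB Require Import structures.
From mathcomp Require Import all_boot all_order all_algebra.
From mathcomp Require Import all_classical all_reals all_analysis.
From mathcomp Require Import Rstruct Rstruct_topology.
From mathcomp Require Import zify ring lra.
Set Implicit Arguments. Unset Strict Implicit. Unset Printing Implicit Defensive.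
Import Order.TTheory GRing.Theory Num.Theory.
Local Open Scope classical_set_scope.
Local Open Scope ring_scope.

Notation RR := Rdefinitions.R.

Section MutualShattering.
Variable X : Type.
Implicit Types (V W H : set (hyp X)) (x : X).

(* Trees indexed by plain sequences rather than tuples, so that a tree can be
   split at its root without casts. *)
Definition shatters H j (g : 'I_j -> seq bool -> X) : Prop :=
  forall xi : seq bool, size xi = j -> exists2 h, H h &
    forall i : 'I_j, h (g i (take i xi)) = Some (nth false xi i).

Definition mshatters V W j :=
  exists g : 'I_j -> seq bool -> X, shatters V g /\ shatters W g.

Definition mshatters_bounded K V W := forall j, mshatters V W j -> (j <= K)%N.

Definition restrict H x y : set (hyp X) := [set h | H h /\ h x = Some y].

Lemma restrict_sub H x y : restrict H x y `<=` H.
Proof. by move=> h []. Qed.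

Lemma shatters_sub H H' j (g : 'I_j -> seq bool -> X) :
  H `<=` H' -> shatters H g -> shatters H' g.
Proof.
by move=> sH hH xi sx; have [h Hh Eh] := hH xi sx; exists h => //; apply: sH.
Qed.

Lemma mshatters_sub V W V' W' j :
  V `<=` V' -> W `<=` W' -> mshatters V W j -> mshatters V' W' j.
Proof.
move=> sV sW [g [hV hW]]; exists g.
by split; [apply: shatters_sub sV hV | apply: shatters_sub sW hW].
Qed.

Lemma mshatters0 V W h1 h2 : V h1 -> W h2 -> mshatters V W 0.
Proof.
move=> V1 W2; have g : 'I_0 -> seq bool -> X by case.
by exists g; split=> xi _; [exists h1 | exists h2] => // -[].
Qed.

Lemma mshatters_boundedS K V W V' W' : V `<=` V' -> W `<=` W' ->
  mshatters_bounded K V' W' -> mshatters_bounded K V W.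
Proof. by move=> sV sW HK j /(mshatters_sub sV sW); apply: HK. Qed.

Definition join_tree j x (g0 g1 : 'I_j -> seq bool -> X) : 'I_j.+1 -> seq bool -> X :=
  fun i s => if unlift ord0 i is Some i' then
               (if head false s then g1 else g0) i' (behead s)
             else x.

Lemma shatters_join H x j (g0 g1 : 'I_j -> seq bool -> X) :
  shatters (restrict H x false) g0 -> shatters (restrict H x true) g1 ->
  shatters H (join_tree x g0 g1).
Proof.
move=> h0 h1 [|y xi] //= [sx].
have [h [Hh hx] Eh] : exists2 h, restrict H x y h &
    forall i : 'I_j, h ((if y then g1 else g0) i (take i xi)) = Some (nth false xi i).
  by case: y; [apply: h1 | apply: h0].
exists h => // i; rewrite /join_tree.
by case: (unliftP ord0 i) => [i'|] -> /=; rewrite ?Eh.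
Qed.

Lemma mshatters_join V W x j :
  mshatters (restrict V x false) (restrict W x false) j ->
  mshatters (restrict V x true) (restrict W x true) j -> mshatters V W j.+1.
Proof.
move=> [g0 [V0 W0]] [g1 [V1 W1]]; exists (join_tree x g0 g1).
by split; apply: shatters_join.
Qed.

Lemma shattered_shatters H j (t : tree X j) :
  shattered H t -> shatters H (fun i s => t i [tuple nth false s u | u < i]).
Proof.
move=> hH xi sx; have [h Hh Eh] := hH [tuple nth false xi u | u < j].
exists h => // i; move: (Eh i); rewrite tnth_mktuple => <-; congr (h (t i _)).
by apply: eq_from_tnth => u; rewrite /Defs.prefix !tnth_mktuple /= nth_take.
Qed.

Lemma shatters_shattered H j (g : 'I_j -> seq bool -> X) :
  shatters H g -> shattered H (fun i z => g i (val z)).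
Proof.
move=> hH xi; have [h Hh Eh] := hH (val xi) (size_tuple xi).
exists h => // i; rewrite (tnth_nth false) -Eh; congr (h (g i _)).
apply: (@eq_from_nth _ false) => [|u].
  by rewrite size_tuple size_takel // size_tuple ltnW.
rewrite size_tuple => hu.
rewrite (nth_take _ hu) -(tnth_nth false (Defs.prefix xi i) (Ordinal hu)).
by rewrite tnth_mktuple (tnth_nth false).
Qed.

Lemma mshattersP V W j :
  mshatters V W j <-> exists t : tree X j, shattered V t /\ shattered W t.
Proof.
split=> [[g [hV hW]] | [t [hV hW]]].
  by exists (fun i z => g i (val z)); split; apply: shatters_shattered.
exists (fun i s => t i [tuple nth false s u | u < i]).
by split; apply: shattered_shatters.
Qed.

Section Rank.
Variable K : nat.

(* One more than the depth of the deepest mutually shattered tree (depths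
   capped at [K]), so that [0] means that [V] or [W] is empty. *)
Definition rank V W : nat := \max_(i < K.+1 | `[< mshatters V W i >]) i.+1.

Lemma rank_le V W : (rank V W <= K.+1)%N.
Proof. by apply/bigmax_leqP => i _; exact: ltn_ord. Qed.

Lemma rank_gt V W i : mshatters V W i -> (i <= K)%N -> (i < rank V W)%N.
Proof.
move=> D hi; have hi' : (i < K.+1)%N by [].
by apply: (@leq_bigmax_cond _ _ (fun i : 'I_K.+1 => i.+1) (Ordinal hi')); apply/asboolP.
Qed.

Lemma rank_witness V W : (0 < rank V W)%N -> exists2 i, mshatters V W i & rank V W = i.+1.
Proof.
case: (pickP (fun i : 'I_K.+1 => `[< mshatters V W i >])) => [i0 Di0 _ | none].
  2: by rewrite /rank big_pred0.
have nonempty : (0 < #|[pred i : 'I_K.+1 | `[< mshatters V W i >]]|)%N.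
  by apply/card_gt0P; exists i0.
have [i /asboolP Di Ei] := eq_bigmax_cond (fun i : 'I_K.+1 => i.+1) nonempty.
by exists i.
Qed.

Lemma rank_sub V W V' W' : V `<=` V' -> W `<=` W' -> (rank V W <= rank V' W')%N.
Proof.
move=> sV sW; apply/bigmax_leqP => i /asboolP D.
by apply: rank_gt; [apply: mshatters_sub D | rewrite -ltnS].
Qed.

Definition soa V W x : bool :=
  (rank (restrict V x false) (restrict W x false) < rank V W)%N.

Lemma rank_full_restrict V W x y :
  (rank V W <= rank (restrict V x y) (restrict W x y))%N -> (0 < rank V W)%N ->
  exists2 i, mshatters (restrict V x y) (restrict W x y) i & rank V W = i.+1.
Proof.
move=> rank_ge rank_gt0.
have rank_eq : rank (restrict V x y) (restrict W x y) = rank V W.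
  by apply/eqP; rewrite eqn_leq rank_ge andbT; apply: rank_sub; apply: restrict_sub.
by rewrite -rank_eq; apply: rank_witness; rewrite rank_eq.
Qed.

(* If both restrictions kept the rank, their witnesses would join at the root x
   into a deeper mutually shattered tree. *)
Lemma rank_restrict_soa V W x : mshatters_bounded K V W -> mshatters V W 0 ->
  (rank (restrict V x (~~ soa V W x)) (restrict W x (~~ soa V W x)) < rank V W)%N.
Proof.
move=> HK D0; rewrite /soa.
set r_false := rank (restrict V x false) (restrict W x false).
case: (ltnP r_false (rank V W)) => [//| ge_false] /=.
rewrite ltnNge; apply/negP => ge_true.
have rank_gt0 : (0 < rank V W)%N by apply: rank_gt D0 _.
have [i D_false E_false] := rank_full_restrict ge_false rank_gt0.
have [i' D_true E_true] := rank_full_restrict ge_true rank_gt0.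
have ii' : i' = i by apply/succn_inj; rewrite -E_true -E_false.
rewrite {}ii' in D_true.
have D := mshatters_join D_false D_true.
by have := rank_gt D (HK _ D); rewrite E_false ltnn.
Qed.

End Rank.
End MutualShattering.

Section Predictors.
Variable X : Type.
Implicit Types (P : seq (X * bool) -> X -> bool) (h : hyp X) (s : seq (X * bool)).

Definition realizes h s : bool := all (fun p => h p.1 == Some p.2) s.

Fixpoint mistakes P pre s : nat :=
  if s is p :: s' then (P pre p.1 != p.2) + mistakes P (rcons pre p) s' else 0.

Definition hyp_mistakes h s : nat := \sum_(p <- s) (h p.1 != Some p.2).

Lemma mistakes_rcons P pre s p :
  mistakes P pre (rcons s p) = (mistakes P pre s + (P (pre ++ s) p.1 != p.2))%N.
Proof.
elim: s pre => [|q s IH] pre /=; first by rewrite cats0 addn0.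
by rewrite IH -cats1 -catA cat1s addnA.
Qed.

Lemma hyp_mistakes_le_size h s : (hyp_mistakes h s <= size s)%N.
Proof.
by rewrite /hyp_mistakes -sum1_size; apply: leq_sum => p _; exact: leq_b1.
Qed.

Lemma realizes_hyp_mistakes h s : realizes h s -> hyp_mistakes h s = 0%N.
Proof.
rewrite /hyp_mistakes; elim: s => [|p s IH]; first by rewrite big_nil.
by rewrite big_cons => /= /andP[/eqP -> /IH ->]; rewrite eqxx.
Qed.

End Predictors.

Section FlipExperts.
Variables (X : Type) (S B : set (hyp X)) (K : nat).
Implicit Types (VW : set (hyp X) * set (hyp X)) (F : nat -> bool).

Definition flip_step (f : bool) (x : X) VW :=
  let y := ~~ soa K VW.1 VW.2 x in
  if f then (restrict VW.1 x y, restrict VW.2 x y) else VW.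

Fixpoint flip_state F (i : nat) (xs : seq X) VW :=
  if xs is x :: xs' then flip_state F i.+1 xs' (flip_step (F i) x VW) else VW.

(* Only the rounds [i] with [F i] shrink the version pair, namely to the label
   the expert then predicts against the SOA. *)
Definition flip_expert F (pre : seq (X * bool)) (x : X) : bool :=
  let VW := flip_state F 0 (map fst pre) (S, B) in
  soa K VW.1 VW.2 x (+) F (size pre).

Lemma flip_state_rcons F i xs x VW :
  flip_state F i (rcons xs x) VW = flip_step (F (i + size xs)%N) x (flip_state F i xs VW).
Proof.
elim: xs i VW => [|y xs IH] i VW /=; first by rewrite addn0.
by rewrite IH addSnnS.
Qed.

Lemma eq_flip_state F G i xs VW : (forall u, (u < i + size xs)%N -> F u = G u) ->
  flip_state F i xs VW = flip_state G i xs VW.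
Proof.
elim: xs i VW => [|y xs IH] i VW //= FG.
rewrite FG -?addSnnS ?ltn_addr //; apply: IH => u hu; apply: FG.
by rewrite -addSnnS.
Qed.

Lemma flip_step_sub (f : bool) x VW :
  (flip_step f x VW).1 `<=` VW.1 /\ (flip_step f x VW).2 `<=` VW.2.
Proof. by rewrite /flip_step; case: f => /=; split=> // h []. Qed.

Lemma flip_state_bounded F i xs VW : mshatters_bounded K VW.1 VW.2 ->
  mshatters_bounded K (flip_state F i xs VW).1 (flip_state F i xs VW).2.
Proof.
elim: xs i VW => [|x xs IH] i VW //= HK; apply: IH.
by have [sV sW] := flip_step_sub (F i) x VW; apply: (mshatters_boundedS sV sW HK).
Qed.

Lemma flip_step_mem (f : bool) x y VW s b : VW.1 s -> VW.2 b -> s x = Some y ->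
  (f -> b x = Some y /\ soa K VW.1 VW.2 x = ~~ y) ->
  (flip_step f x VW).1 s /\ (flip_step f x VW).2 b.
Proof.
rewrite /flip_step; case: f => // Vs Wb sx /(_ isT) [bx ->].
by rewrite negbK.
Qed.

Lemma rank_flip_step (f : bool) x VW :
  mshatters_bounded K VW.1 VW.2 -> mshatters VW.1 VW.2 0 ->
  (rank K (flip_step f x VW).1 (flip_step f x VW).2 + f <= rank K VW.1 VW.2)%N.
Proof.
by rewrite /flip_step; case: f => HK D0 /=; rewrite ?addn0 ?addn1 // rank_restrict_soa.
Qed.

Lemma flip_state_rcons_set F c (pre : seq (X * bool)) x y :
  let F' u := if u == size pre then c else F u in
  flip_state F' 0 (map fst (rcons pre (x, y))) (S, B) =
  flip_step c x (flip_state F 0 (map fst pre) (S, B)).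
Proof.
move=> F'; rewrite map_rcons flip_state_rcons add0n size_map /F' eqxx.
by congr flip_step; apply: eq_flip_state => u; rewrite add0n size_map => /ltn_eqF ->.
Qed.

Lemma flip_expert_tracks s b : S s -> B b -> mshatters_bounded K S B ->
  forall sq pre F0, let VW := flip_state F0 0 (map fst pre) (S, B) in
  VW.1 s -> VW.2 b -> realizes s sq ->
  exists F, [/\ (forall u, (u < size pre)%N -> F u = F0 u),
     (forall u, (size pre + size sq <= u)%N -> F u = false),
     (\sum_(size pre <= u < size pre + size sq) F u <= (rank K VW.1 VW.2).-1)%N &
     (mistakes (flip_expert F) pre sq <= hyp_mistakes b sq)%N].
Proof.
move=> Ss Bb HK; elim=> [|[x y] sq IH] pre F0 VW Vs Wb /=.
  move=> _; exists (fun u => if (u < size pre)%N then F0 u else false); split.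
  - by move=> u ->.
  - by move=> u; rewrite addn0 leqNgt => /negbTE ->.
  - by rewrite addn0 big_geq.
  - by [].
move=> /andP[/eqP sx s_sq].
set sa := soa K VW.1 VW.2 x.
set c := (b x == Some y) && (sa != y).
pose F1 u := if u == size pre then c else F0 u.
have HKV : mshatters_bounded K VW.1 VW.2 by apply: flip_state_bounded.
have D0 : mshatters VW.1 VW.2 0 by apply: mshatters0 Vs Wb.
have [Vs' Wb'] : (flip_step c x VW).1 s /\ (flip_step c x VW).2 b.
  apply: (flip_step_mem Vs Wb sx) => /andP[/eqP bx sa_y]; split=> //.
  by move: sa_y; rewrite /sa; case: (soa _ _ _ x); case: (y).
move: (IH (rcons pre (x, y)) F1); rewrite /= flip_state_rcons_set => /(_ Vs' Wb' s_sq).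
case=> F [F_pre F_post F_sum F_mist].
have F_pre0 u : (u < size pre)%N -> F u = F0 u.
  by move=> hu; rewrite F_pre ?size_rcons 1?ltnW // /F1 ltn_eqF.
have F_now : F (size pre) = c by rewrite F_pre /= ?size_rcons // /F1 eqxx.
exists F; split=> //.
- by move=> u hu; apply: F_post; rewrite size_rcons addSnnS.
- rewrite big_ltn ?addnS ?ltnS ?leq_addr // F_now.
  move: F_sum; rewrite size_rcons addSn -/VW => F_sum.
  have rank_pos : (0 < rank K (flip_step c x VW).1 (flip_step c x VW).2)%N.
    exact: rank_gt (mshatters0 Vs' Wb') (leq0n K).
  have := rank_flip_step c x HKV D0; lia.
- rewrite /= /hyp_mistakes big_cons /=.
  have -> : flip_expert F pre x = sa (+) c.
    by rewrite /flip_expert F_now (@eq_flip_state F F0) // add0n size_map.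
  apply: leq_add => //; rewrite /c.
  by case: (b x == Some y); case: (sa); case: (y).
Qed.

Lemma exists_flip_expert s b sq : S s -> B b -> mshatters_bounded K S B ->
  realizes s sq -> exists F, [/\ forall u, (size sq <= u)%N -> F u = false,
    (\sum_(u < size sq) F u <= K)%N &
    (mistakes (flip_expert F) [::] sq <= hyp_mistakes b sq)%N].
Proof.
move=> Ss Bb HK s_sq.
have [F [_ F_post F_sum F_mist]] :=
  @flip_expert_tracks s b Ss Bb HK sq [::] (fun=> false) Ss Bb s_sq.
exists F; split=> //; move: F_sum; rewrite /= add0n big_mkord => /leq_trans; apply.
by have := rank_le K S B; lia.
Qed.

End FlipExperts.

Section Learners.
Variable X : Type.
Implicit Types (L : learner X) (h : hyp X) (s : seq (X * bool)).

Lemma err_ge0 p y : 0 <= p <= 1 -> 0 <= err p y.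
Proof. by case/andP=> p0 p1; case: y; rewrite /= ?subr_ge0. Qed.

Lemma err_le1 p y : 0 <= p <= 1 -> err p y <= 1.
Proof. by case/andP=> p0 p1; case: y; rewrite /= ?gerBl. Qed.

Lemma cumloss_rcons L pre s p :
  cumloss L pre (rcons s p) = cumloss L pre s + err (L (pre ++ s) p.1) p.2.
Proof.
case: p => x0 y0; elim: s pre => [|[x y] s IH] pre /=; first by rewrite cats0 addr0 add0r.
by rewrite IH -cats1 -catA cat1s addrA.
Qed.

Lemma cumloss_ge0 L pre s : is_learner L -> 0 <= cumloss L pre s.
Proof.
move=> HL; elim: s pre => [|[x y] s IH] pre //=.
by rewrite addr_ge0 ?err_ge0.
Qed.

Definition det_learner (P : seq (X * bool) -> X -> bool) : learner X :=
  fun pre x => (P pre x)%:R.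

Lemma det_learnerP P : is_learner (det_learner P).
Proof. by move=> pre x; rewrite /det_learner; case: (P pre x); rewrite ?lexx ?ler01. Qed.

Lemma cumloss_det_learner P pre s : cumloss (det_learner P) pre s = (mistakes P pre s)%:R.
Proof.
elim: s pre => [|[x y] s IH] pre //=.
by rewrite IH natrD /det_learner /err; case: (P pre x); case: y; rewrite /= ?subrr ?subr0.
Qed.

Lemma mistakeH_hyp_mistakes h s : mistakeH h s = (hyp_mistakes h s)%:R / (size s)%:R.
Proof.
rewrite /mistakeH /hyp_mistakes natr_sum; congr (_ / _).
by apply: eq_bigr => p _; case: eqP.
Qed.

Lemma mistakeH_ge0 h s : 0 <= mistakeH h s.
Proof. by rewrite mistakeH_hyp_mistakes divr_ge0. Qed.

Lemma Forall_realizes h s : List.Forall (fun p => h p.1 = Some p.2) s <-> realizes h s.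
Proof.
elim: s => [|p s IH]; first by split.
split=> [/List.Forall_cons_iff [hp /IH hs] | /andP [/eqP hp /IH hs]].
  by apply/andP; split; [apply/eqP | ].
by constructor.
Qed.

Lemma CompOLP n S B eps L : is_learner L ->
  CompOL n S B eps L <->
  forall (s b : hyp X) sq, S s -> B b -> size sq = n -> realizes s sq ->
    mistakeL L sq <= mistakeH b sq + eps.
Proof.
move=> HL; split=> [[_ HC] s b sq Ss Bb sz s_sq | HC].
  have /le_trans := HC s sq Ss sz (proj2 (Forall_realizes s sq) s_sq).
  move=> /(_ ((mistakeH b sq)%:E + eps%:E)%E); rewrite -EFinD lee_fin; apply.
  by rewrite EFinD leeD2r //; apply: ereal_inf_lbound; exists b.
split=> // s sq Ss sz /Forall_realizes s_sq.
rewrite -[mistakeL L sq](subrK eps) EFinD leeD2r //.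
apply: le_ereal_inf_tmp => _ [b Bb <-].
by rewrite lee_fin lerBlDr (HC s).
Qed.

Lemma CompOL_half n (S B : set (hyp X)) : CompOL n S B 2^-1 (fun _ _ => 2^-1).
Proof.
have half01 : 0 <= (2^-1 : RR) <= 1.
  by apply/andP; split; [rewrite invr_ge0 | rewrite invf_le1 ?ler1n].
apply/CompOLP => [pre x // | s b sq _ _ _ _].
have loss pre s' : cumloss (fun _ _ => 2^-1) pre s' = (size s')%:R / 2 :> RR.
  elim: s' pre => [|[x y] s' IH] pre /=; first by rewrite mul0r.
  by rewrite IH; case: y => /=; rewrite -?natr1 ?mulrDl; field.
apply: le_trans (_ : _ <= 2^-1) _; last by rewrite lerDr mistakeH_ge0.
rewrite /mistakeL loss; case: (size sq) => [|k]; first by rewrite !mul0r invr_ge0.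
by rewrite mulrAC divff ?mul1r // pnatr_eq0.
Qed.

End Learners.

Section Hedge.
Variables (X : Type) (E : finType) (pr : E -> RR) (P : E -> seq (X * bool) -> X -> bool).
Variable be : RR.
Hypotheses (pr_gt0 : forall e, 0 < pr e) (pr_sum : \sum_e pr e = 1).
Hypotheses (be_gt0 : 0 < be) (be_le1 : be <= 1).

Definition hedge_weight pre e := pr e * be ^+ mistakes (P e) [::] pre.

Definition hedge_mass pre := \sum_e hedge_weight pre e.

Definition hedge : learner X :=
  fun pre x => (\sum_e hedge_weight pre e * (P e pre x)%:R) / hedge_mass pre.

Lemma hedge_weight_gt0 pre e : 0 < hedge_weight pre e.
Proof. by rewrite mulr_gt0 // exprn_gt0. Qed.

Lemma hedge_weight_le_mass pre e : hedge_weight pre e <= hedge_mass pre.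
Proof.
rewrite /hedge_mass (bigD1 e) //= lerDl.
by apply: sumr_ge0 => i _; apply: ltW; apply: hedge_weight_gt0.
Qed.

Lemma hedge_mass_gt0 pre : 0 < hedge_mass pre.
Proof.
case: (pickP (fun _ : E => true)) => [e _ | E0].
  exact: lt_le_trans (hedge_weight_gt0 pre e) (hedge_weight_le_mass pre e).
by move: pr_sum; rewrite big_pred0 // => /esym/eqP; rewrite oner_eq0.
Qed.

Lemma hedge_is_learner : is_learner hedge.
Proof.
move=> pre x; have mass_gt0 := hedge_mass_gt0 pre.
have w_ge0 e : 0 <= hedge_weight pre e by exact/ltW/hedge_weight_gt0.
apply/andP; split.
  by rewrite divr_ge0 ?(ltW mass_gt0) //; apply: sumr_ge0 => e _; rewrite mulr_ge0.
rewrite /hedge ler_pdivrMr // mul1r; apply: ler_sum => e _.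
by case: (P e pre x); rewrite ?mulr1 ?mulr0.
Qed.

Lemma err_hedge pre x y :
  err (hedge pre x) y * hedge_mass pre = \sum_e hedge_weight pre e * (P e pre x != y)%:R.
Proof.
have mass_neq0 : hedge_mass pre != 0 by rewrite gt_eqF // hedge_mass_gt0.
case: y => /=; last by rewrite divfK //; apply: eq_bigr => e _; case: (P e pre x).
rewrite mulrBl mul1r divfK // /hedge_mass -sumrB; apply: eq_bigr => e _.
by case: (P e pre x); rewrite /= ?mulr1 ?mulr0 ?subrr ?subr0.
Qed.

Lemma hedge_mass_rcons pre x y : hedge_mass (rcons pre (x, y)) =
  hedge_mass pre * (1 - (1 - be) * err (hedge pre x) y).
Proof.
rewrite mulrBr mulr1 [_ * (_ * _)]mulrC -mulrA err_hedge /hedge_mass mulr_sumr -sumrB.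
apply: eq_bigr => e _; rewrite /hedge_weight mistakes_rcons cat0s exprD /=.
by case: (P e pre x != y); rewrite /= ?expr1 ?expr0 ?mulr1 ?mulr0 ?subr0 //; ring.
Qed.

Lemma hedge_mass_le pre : hedge_mass pre <= expR (- ((1 - be) * cumloss hedge [::] pre)).
Proof.
elim/last_ind: pre => [|pre [x y] IH].
  rewrite /= mulr0 oppr0 exp.expR0 -pr_sum le_eqVlt; apply/orP; left; apply/eqP.
  by apply: eq_bigr => e _; rewrite /hedge_weight /= expr0 mulr1.
rewrite hedge_mass_rcons cumloss_rcons cat0s /= [(1 - be) * (_ + _)]mulrDr.
rewrite opprD exp.expRD.
set l := err (hedge pre x) y.
have [l_ge0 l_le1] : 0 <= l /\ l <= 1 by rewrite err_ge0 ?err_le1 ?hedge_is_learner.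
apply: ler_pM => //; first exact: ltW (hedge_mass_gt0 pre).
- rewrite subr_ge0; apply: le_trans (_ : (1 - be) * 1 <= 1).
    by rewrite ler_wpM2l // subr_ge0.
  by rewrite mulr1 gerBl ltW.
- by rewrite -mulNr; exact: (expR_ge1Dx (- (1 - be) * l)).
Qed.

Lemma hedge_regret pre e :
  pr e * be ^+ mistakes (P e) [::] pre <= expR (- ((1 - be) * cumloss hedge [::] pre)).
Proof. exact: le_trans (hedge_weight_le_mass pre e) (hedge_mass_le pre). Qed.

End Hedge.

Lemma hedge_loss_le (X : Type) (E : finType) (pr : E -> RR)
    (P : E -> seq (X * bool) -> X -> bool) (sig lam : RR) pre e :
  (forall e, 0 < pr e) -> \sum_e pr e = 1 -> 0 < sig -> expR (- lam) <= pr e ->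
  sig * cumloss (hedge pr P (expR (- sig))) [::] pre <=
  (1 + sig) * (lam + sig * (mistakes (P e) [::] pre)%:R).
Proof.
move=> pr_gt0 pr_sum sig_gt0 pr_e.
set be := expR (- sig); set M := mistakes (P e) [::] pre.
set L := cumloss _ [::] pre.
have be_gt0 : 0 < be := expR_gt0 _.
have be_le1 : be <= 1 by rewrite expR_le1 oppr_le0 ltW.
have L_ge0 : 0 <= L by apply: cumloss_ge0; apply: hedge_is_learner.
have regret : (1 - be) * L <= lam + sig * M%:R.
  rewrite -lerN2 -ler_expR.
  apply: le_trans (hedge_regret P pr_gt0 pr_sum be_gt0 be_le1 pre e).
  rewrite opprD exp.expRD -mulNr expRM_natr.
  by apply: ler_wpM2r; rewrite // exprn_ge0 ?ltW.
have decay : sig <= (1 + sig) * (1 - be).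
  have : be * (1 + sig) <= 1.
    by rewrite /be expRN ler_pdivrMl ?expR_gt0 ?mulr1 ?expR_ge1Dx.
  nra.
apply: le_trans (_ : (1 + sig) * (1 - be) * L <= _).
  by rewrite ler_wpM2r.
by rewrite -mulrA ler_wpM2l // addr_ge0 ?ltW.
Qed.

Section Adversary.
Variables (X : Type) (L : learner X) (j : nat) (g : 'I_j.+1 -> seq bool -> X).

(* Rounds [u <= j] walk down the tree [g], labelled against the learner's more
   likely prediction; later rounds repeat the root with its label. *)
Definition adv_index u : 'I_j.+1 := odflt ord0 (insub u).

Definition adv_point u (ys : seq bool) : X := g (adv_index u) (take (adv_index u) ys).

Definition adv_label u (pre : seq (X * bool)) : bool :=
  if (u < j.+1)%N then L pre (adv_point u (map snd pre)) <= 2^-1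
  else nth false (map snd pre) 0.

Fixpoint adv_history u : seq (X * bool) :=
  if u is u'.+1 then
    let pre := adv_history u' in
    rcons pre (adv_point u' (map snd pre), adv_label u' pre)
  else [::].

Lemma adv_indexE u : (u < j.+1)%N -> adv_index u = u :> nat.
Proof. by move=> uj; rewrite /adv_index insubT. Qed.

Lemma adv_index0 u : (j.+1 <= u)%N -> adv_index u = ord0.
Proof. by move=> ju; rewrite /adv_index insubF // ltnNge ju. Qed.

Lemma adv_index_le u : (adv_index u <= u)%N.
Proof. by case: (ltnP u j.+1) => [/adv_indexE -> | /adv_index0 ->]. Qed.

Lemma size_adv_history u : size (adv_history u) = u.
Proof. by elim: u => //= u IH; rewrite size_rcons IH. Qed.

Lemma take_adv_history u v : (u <= v)%N -> take u (adv_history v) = adv_history u.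
Proof.
elim: v => [|v IH]; first by rewrite leqn0 => /eqP ->.
rewrite leq_eqVlt => /orP[/eqP -> | ]; first by rewrite take_oversize // size_adv_history.
by rewrite ltnS => uv /=; rewrite -cats1 takel_cat ?size_adv_history // IH.
Qed.

Lemma nth_adv_history v u d : (u < v)%N -> nth d (adv_history v) u =
  (adv_point u (map snd (adv_history u)), adv_label u (adv_history u)).
Proof.
move=> uv; rewrite -(nth_take d (ltnSn u)) take_adv_history //=.
by rewrite nth_rcons size_adv_history ltnn eqxx.
Qed.

Lemma cumloss_adv_history u : is_learner L ->
  (minn u j.+1)%:R / 2 <= cumloss L [::] (adv_history u).
Proof.
move=> HL; elim: u => [|u IH]; first by rewrite min0n mul0r.
rewrite /= cumloss_rcons cat0s.
set x := adv_point u _.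
have loss_ge0 := err_ge0 (adv_label u (adv_history u)) (HL (adv_history u) x).
case: (ltnP u j.+1) => uj.
  have -> : minn u.+1 j.+1 = (minn u j.+1).+1 by lia.
  rewrite -[(minn u j.+1).+1%:R]natr1 mulrDl; apply: lerD => //=.
  by rewrite /adv_label uj -/x /err; case: (leP (L _ x) 2^-1) => /= p_half; lra.
have -> : minn u.+1 j.+1 = minn u j.+1 by lia.
by rewrite -[X in X <= _]addr0 lerD.
Qed.

Variable n : nat.
Let labels := map snd (adv_history n).
(* The branch of [g] followed by the adversary, padded with [false] when [n <= j]. *)
Let branch := mkseq (nth false labels) j.+1.

Lemma nth_adv_history_labels u d : (u < n)%N -> nth d (adv_history n) u =
  (g (adv_index u) (take (adv_index u) labels), nth false labels (adv_index u)).
Proof.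
move=> un; have prefix_labels : map snd (adv_history u) = take u labels.
  by rewrite -map_take take_adv_history // ltnW.
rewrite nth_adv_history // /adv_point prefix_labels take_takel ?adv_index_le //.
congr pair; case: (ltnP u j.+1) => uj; last first.
  rewrite /adv_label ltnNge uj /= prefix_labels adv_index0 //.
  by rewrite nth_take // (leq_trans _ uj).
rewrite adv_indexE // /labels (nth_map d) ?size_adv_history //.
by rewrite nth_adv_history.
Qed.

Lemma adv_history_realizes h :
  (forall i : 'I_j.+1, h (g i (take i branch)) = Some (nth false branch i)) ->
  realizes h (adv_history n).
Proof.
move=> h_branch; apply/(all_nthP (g ord0 [::], false)) => u.
rewrite size_adv_history => un; rewrite nth_adv_history_labels //=.
have i_le_n : (adv_index u <= n)%N by apply: leq_trans (adv_index_le u) (ltnW un).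
have i_le_j : (adv_index u <= size branch)%N by rewrite size_mkseq ltnW.
have take_branch : take (adv_index u) branch = take (adv_index u) labels.
  apply: (@eq_from_nth _ false) => [|v].
    by rewrite !size_takel // size_map size_adv_history.
  rewrite size_takel // => vi.
  by rewrite !nth_take // nth_mkseq // (ltn_trans vi).
by rewrite -take_branch h_branch nth_mkseq.
Qed.

Lemma CompOL_ge_depth (S B : set (hyp X)) eps : (0 < n)%N -> CompOL n S B eps L ->
  shatters S g -> shatters B g -> (minn n j.+1)%:R / (2 * n%:R) <= eps.
Proof.
move=> n_gt0 HC gS gB; have HL := proj1 HC.
have [s Ss s_branch] := gS branch (size_mkseq _ _).
have [b Bb b_branch] := gB branch (size_mkseq _ _).
have := (proj1 (CompOLP n S B eps HL) HC) s b _ Ss Bb (size_adv_history n).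
move=> /(_ (adv_history_realizes s_branch)).
rewrite mistakeH_hyp_mistakes realizes_hyp_mistakes ?adv_history_realizes //.
rewrite mul0r add0r; apply: le_trans.
rewrite /mistakeL size_adv_history invfM mulrA ler_wpM2r ?invr_ge0 ?ler0n //.
exact: cumloss_adv_history.
Qed.

End Adversary.

Section LowerBound.
Variables (X : Type) (S B : set (hyp X)) (n : nat).

Lemma epsstar_le eps L : 0 <= eps -> CompOL n S B eps L -> epsstar n S B <= eps.
Proof.
move=> eps_ge0 HC; apply: ge_inf; last by split=> //; exists L.
by exists 0 => x [].
Qed.

Lemma epsstar_ge a : (forall eps L, 0 <= eps -> CompOL n S B eps L -> a <= eps) ->
  a <= epsstar n S B.
Proof.
move=> H; apply: lb_le_inf => [|x [x_ge0 [L HL]]]; last exact: H HL.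
by exists 2^-1; split; [rewrite invr_ge0 | exists (fun _ _ => 2^-1); apply: CompOL_half].
Qed.

Lemma epsstar_le_half : epsstar n S B <= 2^-1.
Proof. by apply: epsstar_le (CompOL_half _ _ _); rewrite invr_ge0. Qed.

Lemma Ldim_ge j : mshatters S B j -> ((j%:R : RR)%:E <= Ldim S B)%E.
Proof. by move=> /mshattersP Dj; apply: ereal_sup_ubound; exists j. Qed.

Lemma Ldim_le M : (forall j, mshatters S B j -> ((j%:R : RR)%:E <= M)%E) ->
  (Ldim S B <= M)%E.
Proof. by move=> H; apply: ge_ereal_sup => _ [j /mshattersP Dj <-]; apply: H. Qed.

Lemma Ldim_bounded k : (Ldim S B <= (k%:R : RR)%:E)%E -> mshatters_bounded k S B.
Proof. by move=> Hk j /Ldim_ge /le_trans /(_ Hk); rewrite lee_fin ler_nat. Qed.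

Lemma epsstar_ge_depth j : (0 < n)%N -> mshatters S B j ->
  (minn n j)%:R / (2 * n%:R) <= epsstar n S B.
Proof.
move=> n_gt0 Dj; apply: epsstar_ge => eps L eps_ge0 HC.
case: j Dj => [_ | j [g [gS gB]]]; first by rewrite minn0 mul0r.
exact: CompOL_ge_depth HC gS gB.
Qed.

Lemma epsstar_ge_Ldim : (0 < n)%N ->
  (Order.min (2^-1)%:E (Ldim S B * ((2 * n%:R)^-1)%:E) <= (epsstar n S B)%:E)%E.
Proof.
move=> n_gt0; set e := epsstar n S B.
have nR_gt0 : (0 : RR) < n%:R by rewrite ltr0n.
rewrite ge_min; case: (lerP 2^-1 e) => [half_le | e_lt_half].
  by rewrite lee_fin half_le.
have Ldim_le_e : (Ldim S B <= (e * (2 * n%:R))%:E)%E.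
  apply: Ldim_le => j Dj; rewrite lee_fin -ler_pdivrMr ?mulr_gt0 //.
  have := epsstar_ge_depth n_gt0 Dj; case: (leqP n j) => [n_le_j | j_lt_n].
    have -> : n%:R / (2 * n%:R) = 2^-1 :> RR by field; rewrite gt_eqF.
    by move=> half_le; have := lt_le_trans e_lt_half half_le; rewrite ltxx.
  by [].
apply/orP; right.
have c_ge0 : (0 <= ((2 * n%:R)^-1)%:E :> \bar RR)%E.
  by rewrite lee_fin invr_ge0 mulr_ge0 // ltW.
have := lee_wpmul2r c_ge0 Ldim_le_e; rewrite -EFinM mulrK //.
by rewrite unitfE mulf_neq0 // gt_eqF.
Qed.

End LowerBound.

Lemma epsstar_Ldim_le0 (X : Type) (S B : set (hyp X)) n :
  (Ldim S B <= 0%:E)%E -> epsstar n S B <= 0.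
Proof.
move=> Ldim_le0; have HK : mshatters_bounded 0 S B by apply: Ldim_bounded.
apply: (@epsstar_le _ _ _ _ _ (det_learner (flip_expert S B 0 (fun=> false)))) => //.
apply/CompOLP => [|s b sq Ss Bb _ s_sq]; first exact: det_learnerP.
have [F [F_post F_sum F_mist]] := exists_flip_expert Ss Bb HK s_sq.
have -> : (fun=> false) = F.
  apply: funext => u; case: (ltnP u (size sq)) => [u_lt | /F_post //].
  by move: F_sum; rewrite leqn0 sum_nat_eq0 => /forallP /(_ (Ordinal u_lt)); case: (F u).
rewrite addr0 /mistakeL cumloss_det_learner mistakeH_hyp_mistakes.
by rewrite ler_wpM2r ?invr_ge0 ?ler0n // ler_nat.
Qed.

Definition bern (q : RR) (b : bool) : RR := if b then q else 1 - q.

Lemma sum_prod_bern m q : \sum_(f : {ffun 'I_m -> bool}) \prod_i bern q (f i) = 1.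
Proof.
rewrite -(bigA_distr_bigA (fun (i : 'I_m) (b : bool) => bern q b)) /=.
by rewrite big1 // => i _; rewrite big_bool /bern /= subrKC.
Qed.

Lemma prod_bern_ge m q (F : nat -> bool) : 0 <= q <= 1 ->
  q ^+ (\sum_(i < m) F i)%N * (1 - q) ^+ m <= \prod_(i < m) bern q (F i).
Proof.
case/andP=> q_ge0 q_le1; have q'_ge0 : 0 <= 1 - q by rewrite subr_ge0.
elim: m => [|m IH]; first by rewrite !big_ord0 expr0 mulr1.
rewrite !big_ord_recr /= exprD exprSr mulrACA.
apply: ler_pM; rewrite ?mulr_ge0 ?exprn_ge0 //.
by rewrite /bern; case: (F m); rewrite /= ?expr1 ?expr0 ?mul1r // ler_piMr ?gerBl.
Qed.

Definition extend_ffun m (f : {ffun 'I_m -> bool}) (u : nat) : bool :=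
  if insub u is Some i then f i else false.

Lemma extend_ffunK m (F : nat -> bool) : (forall u, (m <= u)%N -> F u = false) ->
  extend_ffun [ffun i : 'I_m => F i] = F.
Proof.
move=> F_post; apply: funext => u; rewrite /extend_ffun.
by case: insubP => [i _ <- | ]; rewrite ?ffunE // -leqNgt => /F_post.
Qed.

Section UpperBound.
Variables (X : Type) (S B : set (hyp X)) (n k : nat).
Hypotheses (n_gt0 : (0 < n)%N) (k_gt0 : (0 < k)%N) (HK : mshatters_bounded k S B).

(* [prior_cost] bounds [- ln] of the prior mass of every flip pattern with at
   most [k] flips. *)
Definition flip_prob : RR := k%:R / (n%:R + k%:R).
Definition prior_cost : RR := k%:R * (ln ((n%:R + k%:R) / k%:R) + 1).
Definition rate : RR := Num.sqrt (prior_cost / n%:R).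

Let nR_gt0 : (0 : RR) < n%:R. Proof. by rewrite ltr0n. Qed.
Let kR_gt0 : (0 : RR) < k%:R. Proof. by rewrite ltr0n. Qed.

Lemma flip_prob_gt0 : 0 < flip_prob.
Proof. by rewrite divr_gt0 ?addr_gt0. Qed.

Lemma flip_prob_lt1 : flip_prob < 1.
Proof. by rewrite ltr_pdivrMr ?addr_gt0 // mul1r ltrDr. Qed.

Lemma prior_cost_gt0 : 0 < prior_cost.
Proof.
by rewrite mulr_gt0 // ltr_pwDr // ln_ge0 // ler_pdivlMr // mul1r lerDr ler0n.
Qed.

Lemma rate_gt0 : 0 < rate.
Proof. by rewrite sqrtr_gt0 divr_gt0 ?prior_cost_gt0. Qed.

Lemma rate_sqr : rate ^+ 2 * n%:R = prior_cost.
Proof.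
by rewrite sqr_sqrtr ?divfK ?gt_eqF // divr_ge0 // ltW ?prior_cost_gt0.
Qed.

Lemma prior_ge (F : nat -> bool) : (\sum_(i < n) F i <= k)%N ->
  expR (- prior_cost) <= \prod_(i < n) bern flip_prob (F i).
Proof.
move=> flips_le_k; have q_gt0 := flip_prob_gt0; have q_lt1 := flip_prob_lt1.
apply: le_trans (prod_bern_ge _ _ _); last by rewrite !ltW.
have power_k : expR (- (k%:R * ln ((n%:R + k%:R) / k%:R))) = flip_prob ^+ k.
  by rewrite -mulrN expRM_natl expRN lnK ?posrE ?divr_gt0 ?addr_gt0 // invf_div.
have power_n : expR (- k%:R) <= (1 - flip_prob) ^+ n.
  have -> : 1 - flip_prob = (1 + k%:R / n%:R)^-1.
    by rewrite /flip_prob; field; rewrite !gt_eqF ?addr_gt0.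
  rewrite exprVn expRN lef_pV2 ?posrE ?expR_gt0 ?exprn_gt0 ?addr_gt0 ?divr_gt0 //.
  apply: le_trans (_ : expR (k%:R / n%:R) ^+ n <= _).
    by rewrite lerXn2r ?nnegrE ?expR_ge1Dx // ltW ?addr_gt0 ?divr_gt0 ?expR_gt0.
  by rewrite -expRM_natl mulrC divfK ?gt_eqF.
rewrite /prior_cost mulrDr mulr1 opprD exp.expRD power_k.
apply: ler_pM; [by rewrite exprn_ge0 // ltW | exact: ltW (expR_gt0 _) | | exact: power_n].
by rewrite ler_wiXn2l // ltW.
Qed.

Lemma epsstar_le_hedge : rate <= 1 -> epsstar n S B <= 3 * rate.
Proof.
move=> rate_le1; have rate_gt0 := rate_gt0.
pose pr (f : {ffun 'I_n -> bool}) := \prod_i bern flip_prob (f i).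
pose P (f : {ffun 'I_n -> bool}) := flip_expert S B k (extend_ffun f).
have pr_gt0 f : 0 < pr f.
  apply: prodr_gt0 => i _; rewrite /bern; case: (f i); rewrite ?subr_gt0.
    exact: flip_prob_gt0.
  exact: flip_prob_lt1.
have pr_sum : \sum_f pr f = 1 by apply: sum_prod_bern.
have be_gt0 : 0 < expR (- rate) := expR_gt0 _.
have be_le1 : expR (- rate) <= 1 by rewrite expR_le1 oppr_le0 ltW.
apply: (@epsstar_le _ _ _ _ _ (hedge pr P (expR (- rate)))).
  by rewrite mulr_ge0 // ltW.
apply/CompOLP => [|s b sq Ss Bb sz s_sq]; first exact: hedge_is_learner.
have [F [F_post F_sum F_mist]] := exists_flip_expert Ss Bb HK s_sq.
have pr_F : expR (- prior_cost) <= pr [ffun i : 'I_n => F i].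
  by rewrite /pr; under eq_bigr do rewrite ffunE; apply: prior_ge; rewrite -sz.
have := hedge_loss_le P sq pr_gt0 pr_sum rate_gt0 pr_F.
rewrite {2}/P extend_ffunK -?sz // -rate_sqr.
set L := cumloss _ _ _; set M := mistakes _ _ _ => loss_le.
have M_le_b : (M%:R : RR) <= (hyp_mistakes b sq)%:R by rewrite ler_nat.
have b_le_n : ((hyp_mistakes b sq)%:R : RR) <= n%:R.
  by rewrite ler_nat -sz hyp_mistakes_le_size.
rewrite /mistakeL mistakeH_hyp_mistakes sz ler_pdivrMr // mulrDl divfK ?gt_eqF //.
rewrite -/L; have : L <= (1 + rate) * (rate * n%:R + M%:R).
  rewrite -(ler_pM2l rate_gt0); apply: le_trans loss_le _.
  by rewrite le_eqVlt; apply/orP; left; apply/eqP; ring.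
have : rate * M%:R <= rate * n%:R by rewrite ler_pM2l // (le_trans M_le_b).
have : rate ^+ 2 * n%:R <= rate * n%:R.
  by rewrite expr2 -mulrA; apply: ler_piMl; rewrite ?mulr_ge0 // ltW.
nra.
Qed.

Lemma prior_cost_le :
  prior_cost / n%:R <= 2 * (k%:R / n%:R * log2 ((2 * k%:R + n%:R) / k%:R)).
Proof.
set r : RR := (2 * k%:R + n%:R) / k%:R.
have r_ge2 : 2 <= r by rewrite ler_pdivlMr // lerDl.
have r_gt0 : 0 < r by apply: lt_le_trans r_ge2.
have ln2_gt0 : 0 < ln (2 : RR) by rewrite ln_gt0 // ltr1n.
have ln2_le1 : ln (2 : RR) <= 1.
  rewrite -[leRHS](expRK 1) ler_ln ?posrE ?expR_gt0 //.
  by have := expR_ge1Dx (1 : RR).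
have log2_ge1 : 1 <= log2 r by rewrite ler_pdivlMr // mul1r ler_ln ?posrE.
have ln_le_log2 : ln r <= log2 r.
  rewrite ler_pdivlMr // ler_piMr //.
  by rewrite ln_ge0 // (le_trans _ r_ge2) // ler1n.
have ln_rho_le : ln ((n%:R + k%:R) / k%:R) <= ln r.
  have rho_le_r : (n%:R + k%:R) / k%:R <= r.
    by rewrite /r ler_pM2r ?invr_gt0 //; have := kR_gt0; lra.
  have rho_gt0 : 0 < (n%:R + k%:R) / k%:R :> RR by rewrite divr_gt0 ?addr_gt0.
  by rewrite ler_ln ?posrE.
rewrite ler_pdivrMr //.
have -> : 2 * (k%:R / n%:R * log2 r) * n%:R = k%:R * (2 * log2 r).
  by field; rewrite gt_eqF.
by rewrite /prior_cost ler_pM2l //; lra.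
Qed.

Lemma epsstar_le_sqrt :
  epsstar n S B <= 6 * Num.sqrt (k%:R / n%:R * log2 ((2 * k%:R + n%:R) / k%:R)).
Proof.
have cost_le := prior_cost_le; set x := k%:R / n%:R * log2 _ in cost_le *.
have x_ge0 : 0 <= x.
  have : 0 < prior_cost / n%:R by rewrite divr_gt0 ?prior_cost_gt0 ?ltr0n.
  lra.
case: (lerP rate 1) => [rate_le1 | rate_gt1].
  apply: le_trans (epsstar_le_hedge rate_le1) _.
  have : rate <= 2 * Num.sqrt x.
    have -> : (2 : RR) = Num.sqrt (2 ^+ 2) by rewrite sqrtr_sqr ger0_norm.
    rewrite -sqrtrM ?exprn_ge0 // ler_sqrt; last by rewrite mulr_ge0 ?exprn_ge0.
    apply: le_trans cost_le _; lra.
  lra.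
have cost_gt1 : 1 < prior_cost / n%:R.
  by rewrite -rate_sqr mulrK ?unitfE ?gt_eqF // expr2 -[1]mulr1 ltr_pM // ltW.
have : 2^-1 <= Num.sqrt x.
  have -> : (2^-1 : RR) = Num.sqrt ((2^-1) ^+ 2) by rewrite sqrtr_sqr ger0_norm ?invr_ge0.
  by rewrite ler_sqrt // expr2; lra.
have := epsstar_le_half S B n; lra.
Qed.

End UpperBound.

Theorem theorem8p7 :
  exists C : Rdefinitions.R, 0 < C /\
  forall (X : Type) (S B : set (hyp X)) (n : nat), (0 < n)%N ->
    let m := Ldim S B in
    let e := epsstar n S B in
    (Order.min (2^-1)%:E (m * ((2 * n%:R)^-1)%:E) <= e%:E)%E /\
    ((m <= 0%:E)%E -> e <= 0) /\
    (forall k : nat, (0 < k)%N -> m = (k%:R)%:E ->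
       e <= C * Num.sqrt (k%:R / n%:R * log2 ((2 * k%:R + n%:R) / k%:R))).
Proof.
exists 6; split=> // X S B n n_gt0 m e.
split; first exact: epsstar_ge_Ldim.
split; first exact: epsstar_Ldim_le0.
move=> k k_gt0 Ldim_k; apply: epsstar_le_sqrt => //.
by apply: Ldim_bounded; rewrite -/m Ldim_k.
Qed.
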